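(* For any valid scheme (satisfying (C1)–(C8)) with $N\ge1$, $K\ge2$, \[ I\big(W_{2:K};Q_{1:N}^{[1,\mathcal{R}_U]},A_{1:N}^{[1,\mathcal{R}_U]},\mathcal{R}_S\,\big|\,W_1\big)\le D-L. \]
   Context: Model (SPIR with user-side common randomness). There are $N\ge1$ non-colluding databases, each storing the same $K\ge2$ messages $W_1,\dots,W_K$. Each message consists of $L$ i.i.d. symbols uniform over a sufficiently large finite field $\mathbb{F}_q$; entropies are in $q$-ary units, so $H(W_k)=L$ and $H(W_{1:K})=KL$. The databases share server-side common randomness $\mathcal{R}_S$, unknown to the user. The user holds user-side common randomness $\mathcal{R}_U$, a subset of the components of $\mathcal{R}_S$, unknown to the databases except for its size (uniform over subsets of given cardinality). $\mathcal{F}$ is the user's retrieval-strategy randomness. To retrieve $W_k$ the user sends $Q_n^{[k,\mathcal{R}_U]}$ to database $n$, receiving $A_n^{[k,\mathcal{R}_U]}$; $W_{\bar k}=\{W_j:j\ne k\}$. A valid scheme satisfies for all $k,n,\mathcal{R}_U$: (C1) $I(W_{1:K};k,\mathcal{F},\mathcal{R}_S,\mathcal{R}_U)=0$; (C2) $I(Q_{1:N}^{[k,\mathcal{R}_U]};W_{1:K},\mathcal{R}_S\setminus\mathcal{R}_U)=0$; (C3) $H(Q_{1:N}^{[k,\mathcal{R}_U]}\mid\mathcal{F})=0$; (C4) $H(A_n^{[k,\mathcal{R}_U]}\mid Q_n^{[k,\mathcal{R}_U]},W_{1:K},\mathcal{R}_S)=0$; (C5) $H(W_k\mid\mathcal{F},A_{1:N}^{[k,\mathcal{R}_U]},\mathcal{R}_U)=0$;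 (C6) user privacy: for all $k,k',n,\mathcal{R}_U$ there is $\mathcal{R}_U'$ with $H(\mathcal{R}_U')=H(\mathcal{R}_U)$ and $(Q_n^{[k,\mathcal{R}_U]},A_n^{[k,\mathcal{R}_U]},W_{1:K},\mathcal{R}_S)\sim(Q_n^{[k',\mathcal{R}_U']},A_n^{[k',\mathcal{R}_U']},W_{1:K},\mathcal{R}_S)$; (C7) $I(W_{\bar k};\mathcal{F},A_{1:N}^{[k,\mathcal{R}_U]},\mathcal{R}_U)=0$; (C8) $I(\mathcal{R}_S\setminus\mathcal{R}_U;\mathcal{F},A_{1:N}^{[k,\mathcal{R}_U]},W_k,\mathcal{R}_U)=0$. $D$ is the maximal total number of downloaded symbols (from all databases). *)

From HB Require Import structures.
From mathcomp Require Import all_boot all_order all_algebra.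
From mathcomp Require Import reals exp.
Set Implicit Arguments. Unset Strict Implicit. Unset Printing Implicit Defensive.
Import Order.TTheory GRing.Theory Num.Theory.
Local Open Scope ring_scope.

(* A probability space is a finite sample space Om with weights P : Om -> R
   (P >= 0, sum P = 1).  A random variable is any function X : Om -> T, T an eqType. *)

Definition is_prob (R : realType) (Om : finType) (P : Om -> R) : Prop :=
  (forall w, 0 <= P w) /\ \sum_(w : Om) P w = 1.

Definition logb (R : realType) (b x : R) : R := ln x / ln b.

Definition pr (R : realType) (Om : finType) (P : Om -> R) (T : eqType)
  (X : Om -> T) (x : T) : R := \sum_(w : Om | X w == x) P w.

Definition vals (Om : finType) (T : eqType) (X : Om -> T) : seq T :=
  undup [seq X w | w <- enum Om].

Definition ent (R : realType) (Om : finType) (P : Om -> R) (b : R) (T : eqType)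
  (X : Om -> T) : R :=
  - \sum_(x <- vals X) pr P X x * logb b (pr P X x).

Definition jnt (Om : finType) (T U : eqType) (X : Om -> T) (Y : Om -> U) :
  Om -> (T * U)%type := fun w => (X w, Y w).

Definition cent (R : realType) (Om : finType) (P : Om -> R) (b : R)
  (T U : eqType) (X : Om -> T) (Y : Om -> U) : R :=
  ent P b (jnt X Y) - ent P b Y.

Definition mi (R : realType) (Om : finType) (P : Om -> R) (b : R)
  (T U : eqType) (X : Om -> T) (Y : Om -> U) : R :=
  ent P b X + ent P b Y - ent P b (jnt X Y).

Definition cmi (R : realType) (Om : finType) (P : Om -> R) (b : R)
  (T U V : eqType) (X : Om -> T) (Y : Om -> U) (Z : Om -> V) : R :=
  ent P b (jnt X Z) + ent P b (jnt Y Z) - ent P b (jnt (jnt X Y) Z) - ent P b Z.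

Definition same_dist (R : realType) (Om : finType) (P : Om -> R) (T : eqType)
  (X Y : Om -> T) : Prop := forall x : T, pr P X x = pr P Y x.

(* Server-side common randomness R_S has M components with values in TR.
   The user's common randomness R_U is the subfamily indexed by S : {set 'I_M}. *)

Definition RU (Om : finType) (M : nat) (TR : eqType) (RS : Om -> {ffun 'I_M -> TR})
  (S : {set 'I_M}) : Om -> {ffun 'I_M -> option TR} :=
  fun w => [ffun j => if j \in S then Some (RS w j) else None].

Definition RSminus (Om : finType) (M : nat) (TR : eqType) (RS : Om -> {ffun 'I_M -> TR})
  (S : {set 'I_M}) : Om -> {ffun 'I_M -> option TR} :=
  fun w => [ffun j => if j \in S then None else Some (RS w j)].

Definition Wk (Om : finType) (K : nat) (MT : eqType) (W : Om -> {ffun 'I_K -> MT})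
  (k : 'I_K) : Om -> MT := fun w => W w k.
Definition Wbar (Om : finType) (K : nat) (MT : eqType) (W : Om -> {ffun 'I_K -> MT})
  (k : 'I_K) : Om -> {ffun 'I_K -> option MT} :=
  fun w => [ffun j => if j == k then None else Some (W w j)].

Definition allN (Om : finType) (N : nat) (T : eqType) (X : 'I_N -> Om -> T) :
  Om -> {ffun 'I_N -> T} := fun w => [ffun n => X n w].

(* A valid scheme: conditions (C1)-(C8).
   - P : probability weights on Om, b = q = #|F| (q-ary units)
   - W : the K messages, each L symbols of F
   - RS : server-side common randomness, S ranges over user subsets of size m
   - Fr : the user's strategy randomness
   - Q k S n, A k S n : query to / answer from database n for desired index k
     and user-side randomness R_U = (components in S) of R_S. *)
Definition valid_scheme (R : realType) (F : finFieldType) (Om : finType) (P : Om -> R)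
  (N K L M m : nat) (TR TF TQ : eqType)
  (W : Om -> {ffun 'I_K -> {ffun 'I_L -> F}})
  (RS : Om -> {ffun 'I_M -> TR}) (Fr : Om -> TF)
  (Q : 'I_K -> {set 'I_M} -> 'I_N -> Om -> TQ)
  (A : 'I_K -> {set 'I_M} -> 'I_N -> Om -> seq F) : Prop :=
  let b := (#|F|%:R : R) in
  (* messages: L i.i.d. uniform symbols each, independent across messages *)
  (forall v, pr P W v = 1 / ((#|F| ^ (K * L))%:R)) /\
  (forall (k : 'I_K) (S : {set 'I_M}), #|S| = m ->
     mi P b W (jnt (jnt (jnt (fun _ : Om => k) Fr) RS) (RU RS S)) = 0) /\
  (forall (k : 'I_K) (S : {set 'I_M}), #|S| = m ->
     mi P b (allN (Q k S)) (jnt W (RSminus RS S)) = 0) /\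
  (forall (k : 'I_K) (S : {set 'I_M}), #|S| = m -> cent P b (allN (Q k S)) Fr = 0) /\
  (forall (k : 'I_K) (S : {set 'I_M}) n, #|S| = m ->
     cent P b (A k S n) (jnt (jnt (Q k S n) W) RS) = 0) /\
  (forall (k : 'I_K) (S : {set 'I_M}), #|S| = m ->
     cent P b (Wk W k) (jnt (jnt Fr (allN (A k S))) (RU RS S)) = 0) /\
  (forall (k k' : 'I_K) n (S : {set 'I_M}), #|S| = m ->
     exists S' : {set 'I_M}, #|S'| = m /\ ent P b (RU RS S') = ent P b (RU RS S) /\
       same_dist P (jnt (jnt (jnt (Q k S n) (A k S n)) W) RS)
                   (jnt (jnt (jnt (Q k' S' n) (A k' S' n)) W) RS)) /\
  (forall (k : 'I_K) (S : {set 'I_M}), #|S| = m ->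
     mi P b (Wbar W k) (jnt (jnt Fr (allN (A k S))) (RU RS S)) = 0) /\
  (forall (k : 'I_K) (S : {set 'I_M}), #|S| = m ->
     mi P b (RSminus RS S)
        (jnt (jnt (jnt Fr (allN (A k S))) (Wk W k)) (RU RS S)) = 0).

(* Download cost: for each desired index k and admissible R_U (subset S), the
   answer of database n is a string of a fixed length d n of symbols of F
   (for every realization of positive probability), and the total number
   of downloaded symbols, \sum_n d n, is at most D (D is the maximum over
   k and R_U of the total download). *)
Definition download_bound (R : realType) (F : finFieldType) (Om : finType) (P : Om -> R)
  (N K M m : nat) (A : 'I_K -> {set 'I_M} -> 'I_N -> Om -> seq F) (D : nat) : Prop :=
  forall (k : 'I_K) (S : {set 'I_M}), #|S| = m ->
    exists d : 'I_N -> nat,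
      (forall (n : 'I_N) (w : Om), 0 < P w -> (size (A k S n w) = d n)%N) /\
      (\sum_(n < N) d n <= D)%N.

(* All quantities are Shannon entropies on a finite probability space, so
   the argument is a chain of elementary identities and inequalities:
   - H(X) is written pointwise as -E[log p(atom of X)] (entE); two random
     variables that are almost surely functions of each other have the
     same entropy (ent_equiv), which lets us rewrite joint variables freely;
   - Gibbs-type inequalities from ln x <= x - 1: conditional mutual
     information is nonnegative (cmi_ge0), a null conditional entropy
     means a.s. functional dependence (cent0_is_fn_of), and an entropy is
     at most the log of the size of any a.s. injective code (ent_le_card);
   - the abstract core (cmi_Wbar_le): if W splits as (W_bar, W_1), the
     queries are functions of the strategy F, the answers of (Q, W, R_S),
     W_1 is decodable from (F, A, R_S) and W is independent of (F, R_S),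
     then I(W_bar; Q, A, R_S | W_1) <= H(A) - H(W_1);
   - finally H(A) <= D since the answers are strings of total length at
     most D, and H(W_1) = L since W_1 is uniform on F^L. *)

From HB Require Import structures.
From mathcomp Require Import all_boot all_order all_algebra perm.
From mathcomp Require Import reals exp ring lra.
Set Implicit Arguments. Unset Strict Implicit. Unset Printing Implicit Defensive.
Import Order.TTheory GRing.Theory Num.Theory.
Local Open Scope ring_scope.

Lemma ln_le_subr1 (R : realType) (x : R) : 0 < x -> ln x <= x - 1.
Proof.
move=> x_gt0; have := @le_ln1Dx R (x - 1).
by rewrite addrCA subrr addr0; apply; rewrite ltrBrDl subrr.
Qed.

Lemma logbX (R : realType) (b : R) n : 1 < b -> logb b (b ^+ n) = n%:R.
Proof.
move=> b_gt1; have lnb_gt0 : 0 < ln b by apply: ln_gt0.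
rewrite /logb lnXn ?(lt_trans ltr01) // -mulr_natr; field; exact: lt0r_neq0.
Qed.

Lemma sum_le_subset (R : numDomainType) (I : finType) (G : I -> R) (p q : pred I) :
  (forall i, 0 <= G i) -> (forall i, p i -> q i) ->
  \sum_(i | p i) G i <= \sum_(i | q i) G i.
Proof.
move=> G_ge0 pq; rewrite big_mkcond [X in _ <= X]big_mkcond /=.
by apply: ler_sum => i _; case: ifP => [/pq ->|_] //; case: ifP.
Qed.

Section Entropy.
Variables (R : realType) (Om : finType) (P : Om -> R).
Hypothesis P_prob : is_prob P.

Let P_ge0 : forall w, 0 <= P w := P_prob.1.

Definition patom (T : eqType) (X : Om -> T) (w : Om) : R := pr P X (X w).

Definition is_fn_of (T U : eqType) (X : Om -> T) (Y : Om -> U) : Prop :=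
  forall w w', 0 < P w -> 0 < P w' -> Y w = Y w' -> X w = X w'.

Lemma pr_ge0 (T : eqType) (X : Om -> T) x : 0 <= pr P X x.
Proof. exact: sumr_ge0. Qed.

Lemma patom_ge (T : eqType) (X : Om -> T) w : P w <= patom X w.
Proof. by rewrite /patom /pr (bigD1 w) //= lerDl sumr_ge0. Qed.

Lemma patom_gt0 (T : eqType) (X : Om -> T) w : 0 < P w -> 0 < patom X w.
Proof. by move=> Pw; apply: lt_le_trans Pw (patom_ge X w). Qed.

Lemma P_gt0 w : P w != 0 -> 0 < P w.
Proof. by move=> Pw; rewrite lt_def Pw P_ge0. Qed.

Lemma sum_vals (T : eqType) (X : Om -> T) (G : Om -> R) :
  \sum_(x <- vals X) \sum_(w | X w == x) G w = \sum_w G w.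
Proof.
under eq_bigr do rewrite big_mkcond /=.
rewrite exchange_big /=; apply: eq_bigr => w _.
rewrite -big_mkcond /= (eq_bigl (pred1 (X w))); last by move=> x; rewrite eq_sym.
rewrite -big_filter filter_pred1_uniq ?big_seq1 ?undup_uniq //.
by rewrite mem_undup; apply/mapP; exists w; rewrite ?mem_enum.
Qed.

Lemma entE (b : R) (T : eqType) (X : Om -> T) :
  ent P b X = - \sum_w P w * logb b (patom X w).
Proof.
rewrite /ent -(sum_vals X); congr (- _); apply: eq_bigr => x _.
by rewrite /pr big_distrl /=; apply: eq_bigr => w /eqP Xw; rewrite /patom /pr Xw.
Qed.

Lemma sum_support (p : pred Om) :
  \sum_(w | p w) P w = \sum_(w | p w && (0 < P w)) P w.
Proof.
rewrite (bigID (fun w => 0 < P w)) /= addrC big1 ?add0r // => w /andP [_ Pw].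
by apply/eqP; rewrite eq_le P_ge0 andbT leNgt.
Qed.

Lemma patom_equiv (T U : eqType) (X : Om -> T) (Y : Om -> U) w :
  is_fn_of X Y -> is_fn_of Y X -> 0 < P w -> patom X w = patom Y w.
Proof.
move=> XY YX Pw; rewrite /patom /pr sum_support [RHS]sum_support.
apply: eq_bigl => w'; case: (boolP (0 < P w')) => Pw'; rewrite ?andbF ?andbT //.
by apply/eqP/eqP => E; [exact: YX | exact: XY].
Qed.

Lemma ent_equiv (b : R) (T U : eqType) (X : Om -> T) (Y : Om -> U) :
  is_fn_of X Y -> is_fn_of Y X -> ent P b X = ent P b Y.
Proof.
move=> XY YX; rewrite !entE; congr (- _); apply: eq_bigr => w _.
have [->|/P_gt0 Pw] := eqVneq (P w) 0; first by rewrite !mul0r.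
by rewrite (patom_equiv XY YX Pw).
Qed.

Lemma fn_of_refl (T : eqType) (X : Om -> T) : is_fn_of X X.
Proof. by move=> w w' _ _. Qed.

Lemma fn_of_trans (T U V : eqType) (X : Om -> T) (Y : Om -> U) (Z : Om -> V) :
  is_fn_of X Y -> is_fn_of Y Z -> is_fn_of X Z.
Proof. by move=> XY YZ w w' Pw Pw' E; apply: XY => //; apply: YZ. Qed.

Lemma fn_of_jnt (T U V : eqType) (X : Om -> T) (Y : Om -> U) (Z : Om -> V) :
  is_fn_of X Z -> is_fn_of Y Z -> is_fn_of (jnt X Y) Z.
Proof. by move=> XZ YZ w w' Pw Pw' E; rewrite /jnt (XZ _ _ Pw Pw' E) (YZ _ _ Pw Pw' E). Qed.

Lemma fn_of_jntl (T U V : eqType) (X : Om -> T) (Y : Om -> U) (Z : Om -> V) :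
  is_fn_of X Y -> is_fn_of X (jnt Y Z).
Proof. by move=> XY w w' Pw Pw' [E _]; apply: XY. Qed.

Lemma fn_of_jntr (T U V : eqType) (X : Om -> T) (Y : Om -> U) (Z : Om -> V) :
  is_fn_of X Z -> is_fn_of X (jnt Y Z).
Proof. by move=> XZ w w' Pw Pw' [_ E]; apply: XZ. Qed.

Lemma fn_of_const (T U : eqType) (X : Om -> T) (c : U) : is_fn_of (fun _ => c) X.
Proof. by []. Qed.

Lemma mi_equiv_r (b : R) (T U V : eqType) (X : Om -> T) (Y : Om -> U) (Y' : Om -> V) :
  is_fn_of Y Y' -> is_fn_of Y' Y -> mi P b X Y = mi P b X Y'.
Proof.
move=> YY' Y'Y; rewrite /mi (ent_equiv b YY' Y'Y).
rewrite (@ent_equiv b _ _ (jnt X Y) (jnt X Y')) //; apply: fn_of_jnt.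
- exact/fn_of_jntl/fn_of_refl.
- exact/fn_of_jntr.
- exact/fn_of_jntl/fn_of_refl.
- exact/fn_of_jntr.
Qed.

Variable b : R.
Hypothesis b_gt1 : 1 < b.

Let lnb_gt0 : 0 < ln b := ln_gt0 b_gt1.

Lemma sum_atom_le1 (T : eqType) (X : Om -> T) x :
  \sum_(w | X w == x) P w / patom X w <= 1.
Proof.
rewrite (eq_bigr (fun w => P w * (pr P X x)^-1)); last first.
  by move=> w /eqP Xw; rewrite /patom Xw.
rewrite -big_distrl /= -/(pr P X x).
by have [->|nz] := eqVneq (pr P X x) 0; rewrite ?mul0r ?mulfV.
Qed.

Lemma cmi_ratio_le1 (T U V : eqType) (X : Om -> T) (Y : Om -> U) (Z : Om -> V) :
  \sum_w P w * (patom (jnt X Z) w * patom (jnt Y Z) w /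
                (patom (jnt (jnt X Y) Z) w * patom Z w)) <= 1.
Proof.
set c := patom (jnt (jnt X Y) Z); set d := patom Z.
pose f w w1 w2 := if (jnt X Z w1 == jnt X Z w) && (jnt Y Z w2 == jnt Y Z w)
  then P w1 * P w2 * (P w / (c w * d w)) else 0.
pose g w1 w2 := if Z w2 == Z w1 then P w1 * P w2 / d w1 else 0.
have expand : \sum_w P w * (patom (jnt X Z) w * patom (jnt Y Z) w / (c w * d w))
    = \sum_w \sum_w1 \sum_w2 f w w1 w2.
  apply: eq_bigr => w _; rewrite /patom /pr big_distrlr /=.
  have -> : forall a : R, P w * (a / (c w * d w)) = a * (P w / (c w * d w)).
    by move=> a; ring.
  rewrite big_distrl /= big_mkcond /=; apply: eq_bigr => w1 _.
  rewrite /f; case: (jnt X Z w1 == jnt X Z w) => /=; last by rewrite big1.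
  rewrite big_distrl /= big_mkcond /=; apply: eq_bigr => w2 _.
  by case: (jnt Y Z w2 == jnt Y Z w).
have inner w1 w2 : \sum_w f w w1 w2 <= g w1 w2.
  rewrite /g; case: eqP => Ez; last first.
    rewrite big1 // => w _; rewrite /f.
    case: eqP => //= -[_ Z1]; case: eqP => //= -[_ Z2].
    by case: Ez; rewrite Z1 Z2.
  pose t := ((X w1, Y w2), Z w1).
  have f_le w : f w w1 w2 <=
      (if jnt (jnt X Y) Z w == t then P w1 * P w2 / d w1 * (P w / c w) else 0).
    have rhs_ge0 : 0 <= (if jnt (jnt X Y) Z w == t
                         then P w1 * P w2 / d w1 * (P w / c w) else 0).
      by case: ifP; rewrite ?mulr_ge0 ?invr_ge0 ?pr_ge0.
    rewrite /f; case: eqP => /= [/pair_equal_spec [X1 Z1]|_] //.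
    case: eqP => /= [/pair_equal_spec [Y2 _]|_] //.
    have -> : jnt (jnt X Y) Z w == t by rewrite /t /jnt X1 Y2 Z1.
    have -> : d w = d w1 by rewrite /d /patom Z1.
    by rewrite invfM le_eqVlt; apply/orP; left; apply/eqP; ring.
  apply: le_trans (ler_sum _ (fun w _ => f_le w)) _.
  rewrite -big_mkcond /= -big_distrr /= -[X in _ <= X]mulr1.
  by rewrite ler_wpM2l ?mulr_ge0 ?invr_ge0 ?pr_ge0 ?sum_atom_le1.
have outer : \sum_w1 \sum_w2 g w1 w2 <= 1.
  rewrite -P_prob.2; apply: ler_sum => w1 _.
  rewrite /g -big_mkcond /= (eq_bigr (fun w2 => P w1 / d w1 * P w2)); last first.
    by move=> w2 _; rewrite mulrAC.
  rewrite -big_distrr /= -/(pr P Z (Z w1)) -/(patom Z w1) -/(d w1).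
  by have [->|nz] := eqVneq (d w1) 0; rewrite ?mulr0 // -mulrA mulVf ?mulr1.
rewrite expand exchange_big /=; under eq_bigr do rewrite exchange_big /=.
apply: le_trans outer.
by apply: ler_sum => w1 _; apply: ler_sum => w2 _; exact: inner.
Qed.

Lemma cmi_ge0 (T U V : eqType) (X : Om -> T) (Y : Om -> U) (Z : Om -> V) :
  0 <= cmi P b X Y Z.
Proof.
set a := patom (jnt X Z); set a' := patom (jnt Y Z).
set c := patom (jnt (jnt X Y) Z); set d := patom Z.
have -> : cmi P b X Y Z = \sum_w P w *
    (logb b (c w) + logb b (d w) - logb b (a w) - logb b (a' w)).
  rewrite /cmi !entE; under [RHS]eq_bigr do rewrite !mulrDr !mulrN.
  by rewrite !sumrB big_split /= -/a -/a' -/c -/d; ring.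
apply: (@le_trans _ _ (\sum_w P w * (1 - a w * a' w / (c w * d w)) / ln b)).
  rewrite -mulr_suml /=; apply: mulr_ge0; last by rewrite invr_ge0 ltW.
  under eq_bigr do rewrite mulrDr mulr1 mulrN.
  by rewrite sumrB P_prob.2 subr_ge0 cmi_ratio_le1.
apply: ler_sum => w _.
have [->|/P_gt0 Pw] := eqVneq (P w) 0; first by rewrite !mul0r.
have ratio_gt0 : 0 < a w * a' w / (c w * d w).
  by rewrite !(mulr_gt0, invr_gt0) ?patom_gt0.
have := ln_le_subr1 ratio_gt0.
rewrite ln_div ?posrE ?mulr_gt0 ?patom_gt0 // !lnM ?posrE ?patom_gt0 // => ln_le.
rewrite /logb -mulrA ler_pM2l //.
have -> : ln (c w) / ln b + ln (d w) / ln b - ln (a w) / ln b - ln (a' w) / ln b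
   = (ln (c w) + ln (d w) - ln (a w) - ln (a' w)) / ln b by ring.
rewrite ler_pM2r ?invr_gt0 //; lra.
Qed.

Lemma ent_const (T : eqType) (c : T) : ent P b (fun _ : Om => c) = 0.
Proof.
rewrite entE big1 ?oppr0 // => w _.
rewrite /patom /pr (eq_bigl xpredT) ?P_prob.2; last by move=> w'; rewrite eqxx.
by rewrite /logb ln1 mul0r mulr0.
Qed.

(* Mutual information is nonnegative: condition on a constant. *)
Lemma mi_ge0 (T U : eqType) (X : Om -> T) (Y : Om -> U) : 0 <= mi P b X Y.
Proof.
have := cmi_ge0 X Y (fun _ => tt); rewrite /cmi /mi ent_const subr0.
have drop_tt (V : eqType) (Z : Om -> V) : ent P b (jnt Z (fun _ => tt)) = ent P b Z.
  by apply: ent_equiv; [apply: fn_of_jnt; [exact: fn_of_refl | exact: fn_of_const] |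
                        exact/fn_of_jntl/fn_of_refl].
by rewrite !drop_tt.
Qed.

Lemma patom_split (T U : eqType) (X : Om -> T) (Y : Om -> U) w :
  patom Y w = patom (jnt X Y) w + \sum_(w' | (Y w' == Y w) && (X w' != X w)) P w'.
Proof.
rewrite /patom /pr (bigID (fun w' => X w' == X w)) /=; congr (_ + _).
by apply: eq_bigl => w'; rewrite /jnt xpair_eqE andbC.
Qed.

(* A null conditional entropy H(X|Y) = 0 means X is a.s. a function of Y:
   every term  P w * log (p_Y(w) / p_{XY}(w))  is nonnegative, hence null,
   so the atom of Y at w carries no mass outside the atom of X. *)
Lemma cent0_is_fn_of (T U : eqType) (X : Om -> T) (Y : Om -> U) :
  cent P b X Y = 0 -> is_fn_of X Y.
Proof.
pose t w := P w * (logb b (patom Y w) - logb b (patom (jnt X Y) w)).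
have -> : cent P b X Y = \sum_w t w.
  rewrite /cent !entE; under [RHS]eq_bigr do rewrite /t mulrDr mulrN.
  by rewrite sumrB; ring.
have t_ge0 w : true -> 0 <= t w.
  move=> _; rewrite /t; have [->|/P_gt0 Pw] := eqVneq (P w) 0; first by rewrite mul0r.
  apply: mulr_ge0; first exact: P_ge0.
  rewrite subr_ge0 /logb ler_pM2r ?invr_gt0 //.
  by rewrite ler_ln ?posrE ?patom_gt0 // (patom_split X Y) lerDl sumr_ge0.
move=> /(psumr_eq0P t_ge0) t0 w w' Pw Pw' Yww'.
have /eqP := t0 w isT; rewrite /t mulf_eq0 gt_eqF //= subr_eq0 /logb.
have lnb_inv_neq0 : (ln b)^-1 != 0 by rewrite invr_eq0 gt_eqF.
rewrite (can_eq (mulfK lnb_inv_neq0)) => /eqP /ln_inj.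
rewrite !posrE !patom_gt0 // => /(_ isT isT).
rewrite (patom_split X Y) -[X in _ = X]addr0 => /addrI rest0.
apply/eqP; apply: contraTT Pw' => Xww'.
have := @psumr_eq0P _ _ _ _ (fun i _ => P_ge0 i) rest0 w'.
by rewrite Yww' eqxx eq_sym Xww' => /(_ isT) ->; rewrite ltxx.
Qed.

(* If X can be coded a.s. injectively into a finite set U, each code word
   gathers normalized mass at most one, so  E[1 / p_X(X)] <= |U|. *)
Lemma sum_inv_patom_le_card (T : eqType) (U : finType) (X : Om -> T) (g : T -> U) :
  (forall w w', 0 < P w -> 0 < P w' -> g (X w) = g (X w') -> X w = X w') ->
  \sum_w P w / patom X w <= #|U|%:R.
Proof.
move=> g_inj; rewrite (partition_big (fun w => g (X w)) xpredT) //=.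
rewrite -sum1_card natr_sum; apply: ler_sum => u _.
have term_ge0 w : 0 <= P w / patom X w by rewrite mulr_ge0 ?invr_ge0 ?pr_ge0.
have null_term w : ~~ (0 < P w) -> P w / patom X w = 0.
  move=> Pw; suff -> : P w = 0 by rewrite mul0r.
  by apply/eqP; rewrite eq_le P_ge0 andbT leNgt.
case: (pickP (fun w => (g (X w) == u) && (0 < P w))) => [w0 /andP [/eqP gw0 Pw0]|none].
  rewrite (bigID (fun w => 0 < P w)) /= [X in _ + X]big1 ?addr0; last first.
    by move=> w /andP [_ /null_term].
  apply: le_trans (sum_atom_le1 X (X w0)).
  apply: sum_le_subset => // w /andP [/eqP gw Pw].
  by apply/eqP; apply: g_inj => //; rewrite gw gw0.
rewrite big1 // => w gw; apply: null_term.
by move: (none w); rewrite gw /= => ->.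
Qed.

Lemma ent_le_card (T : eqType) (U : finType) (X : Om -> T) (g : T -> U) :
  (forall w w', 0 < P w -> 0 < P w' -> g (X w) = g (X w') -> X w = X w') ->
  ent P b X <= logb b #|U|%:R.
Proof.
move=> g_inj.
have [w0 Pw0] : exists w, 0 < P w.
  apply/existsP; apply: contraT; rewrite negb_exists => /forallP none.
  have : \sum_w P w = 0.
    by apply: big1 => w _; apply/eqP; rewrite eq_le P_ge0 andbT leNgt none.
  by rewrite P_prob.2 => /eqP; rewrite oner_eq0.
have n_gt0 : 0 < (#|U|%:R : R) by rewrite ltr0n; apply/card_gt0P; exists (g (X w0)).
set n := (#|U|%:R : R) in n_gt0 *.
rewrite -subr_le0.
have -> : ent P b X - logb b n = \sum_w P w * (- logb b (patom X w) - logb b n).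
  rewrite entE; under [RHS]eq_bigr do rewrite mulrBr mulrN.
  by rewrite sumrB -big_distrl /= P_prob.2 mul1r sumrN.
apply: (@le_trans _ _ (\sum_w P w * ((n * patom X w)^-1 - 1) / ln b)).
  apply: ler_sum => w _.
  have [->|/P_gt0 Pw] := eqVneq (P w) 0; first by rewrite !mul0r.
  have inv_gt0 : 0 < (n * patom X w)^-1 by rewrite invr_gt0 mulr_gt0 ?patom_gt0.
  have := ln_le_subr1 inv_gt0.
  rewrite lnV ?posrE ?mulr_gt0 ?patom_gt0 // lnM ?posrE ?patom_gt0 // => ln_le.
  rewrite /logb -mulrA ler_pM2l //.
  have -> : - (ln (patom X w) / ln b) - ln n / ln b = (- (ln n + ln (patom X w))) / ln b.
    by ring.
  by rewrite ler_pM2r ?invr_gt0.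
rewrite -mulr_suml /=; apply: mulr_le0_ge0; last by rewrite invr_ge0 ltW.
under eq_bigr do rewrite mulrBr mulr1.
rewrite sumrB P_prob.2 subr_le0.
under eq_bigr do rewrite invfM mulrCA mulrA -mulrA.
by rewrite -big_distrr /= mulrC ler_pdivrMr // mul1r (sum_inv_patom_le_card g_inj).
Qed.

Lemma ent_unif (T : eqType) (X : Om -> T) c :
  (forall x, pr P X x = c) -> ent P b X = - logb b c.
Proof.
move=> X_unif; rewrite entE; congr (- _).
by under eq_bigr do rewrite /patom X_unif; rewrite -big_distrl /= P_prob.2 mul1r.
Qed.

End Entropy.

Lemma card_F_gt1 (F : finFieldType) : (1 < #|F|)%N.
Proof. by apply/card_gt1P; exists 0, 1; rewrite !inE eq_sym oner_eq0. Qed.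

Lemma eq_tperm_left (T : finType) (x y z : T) : (tperm x y z == x) = (z == y).
Proof. by rewrite -[X in _ == X](tpermR x y) (inj_eq perm_inj). Qed.

Section Messages.
Variables (R : realType) (Om : finType) (P : Om -> R).
Hypothesis P_prob : is_prob P.

Lemma pr_comp (T : finType) (U : eqType) (X : Om -> T) (f : T -> U) y :
  pr P (fun w => f (X w)) y = \sum_(x | f x == y) pr P X x.
Proof.
rewrite /pr (partition_big X (fun x => f x == y)) //=.
apply: eq_bigr => x /eqP fx; apply: eq_bigl => w.
by apply/andP/eqP => [[_ /eqP //]|Xw]; rewrite Xw fx.
Qed.

(* A coordinate of a uniformly distributed finite function is uniform:
   swapping two values in coordinate k permutes the function space, so
   all values of that coordinate are equally likely. *)
Lemma pr_coord_unif (K : nat) (T : finType) (W : Om -> {ffun 'I_K -> T}) (k : 'I_K) c :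
  (forall v, pr P W v = c) -> forall x, pr P (Wk W k) x = #|T|%:R^-1.
Proof.
move=> W_unif.
have prE x : pr P (Wk W k) x = \sum_(v : {ffun 'I_K -> T} | v k == x) c.
  by rewrite (pr_comp W (fun v => v k)); apply: eq_bigr => v _.
have pr_sym x y : pr P (Wk W k) x = pr P (Wk W k) y.
  pose s (v : {ffun 'I_K -> T}) := [ffun j => if j == k then tperm x y (v j) else v j].
  have sK : involutive s.
    by move=> v; apply/ffunP => j; rewrite !ffunE; case: eqP => // _; rewrite tpermK.
  rewrite !prE (reindex_inj (inv_inj sK)) /=; apply: eq_bigl => v.
  by rewrite ffunE eqxx eq_tperm_left.
have total : \sum_(x : T) pr P (Wk W k) x = 1.
  by rewrite -P_prob.2 /pr (partition_big (Wk W k) xpredT).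
move=> x; move: total; under eq_bigr do rewrite (pr_sym _ x).
rewrite sumr_const => px.
have card_neq0 : (#|T|%:R : R) != 0.
  by rewrite pnatr_eq0 -lt0n; apply/card_gt0P; exists x.
by apply: (mulIf card_neq0); rewrite mulVf // mulr_natr.
Qed.

Lemma ent_Wk (F : finFieldType) (K L : nat) (W : Om -> {ffun 'I_K -> {ffun 'I_L -> F}})
  (k : 'I_K) c : (forall v, pr P W v = c) -> ent P (#|F|%:R : R) (Wk W k) = L%:R.
Proof.
move=> W_unif; have b_gt1 : 1 < (#|F|%:R : R) by rewrite ltr1n card_F_gt1.
rewrite (ent_unif P_prob _ (pr_coord_unif k W_unif)) card_ffun card_ord natrX.
rewrite /logb lnV ?posrE ?exprn_gt0 ?(lt_trans ltr01) // mulNr opprK.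
exact: logbX.
Qed.

End Messages.

Section Collections.
Variables (R : realType) (Om : finType) (P : Om -> R).
Hypothesis P_prob : is_prob P.

(* Answers of fixed lengths d n, of total length at most D, carry at most D
   q-ary units: on the support, concatenating them is an injective code
   into the D'-tuples of F, where D' = sum d n <= D. *)
Lemma ent_answers_le (F : finFieldType) (N : nat) (A : 'I_N -> Om -> seq F)
  (d : 'I_N -> nat) (D : nat) :
  (forall n w, 0 < P w -> size (A n w) = d n) -> (\sum_(n < N) d n <= D)%N ->
  ent P (#|F|%:R : R) (allN A) <= D%:R.
Proof.
move=> A_size sum_le.
have b_gt1 : 1 < (#|F|%:R : R) by rewrite ltr1n card_F_gt1.
set D' := (\sum_(n < N) d n)%N.
pose pieces w := [seq allN A w n | n <- enum 'I_N].
have pieces_shape w : 0 < P w -> shape (pieces w) = [seq d n | n <- enum 'I_N].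
  by move=> Pw; rewrite /shape -map_comp; apply: eq_map => n /=; rewrite ffunE A_size.
have concat_size w : 0 < P w -> size (flatten (pieces w)) = D'.
  by move=> Pw; rewrite size_flatten pieces_shape // sumnE big_map big_enum.
pose code (v : {ffun 'I_N -> seq F}) : D'.-tuple F :=
  insubd (nseq_tuple D' 0) (flatten [seq v n | n <- enum 'I_N]).
have code_inj w w' : 0 < P w -> 0 < P w' -> code (allN A w) = code (allN A w') ->
    allN A w = allN A w'.
  move=> Pw Pw' /(congr1 val); rewrite !val_insubd !concat_size // eqxx => same.
  have : pieces w = pieces w'.
    by rewrite -[pieces w]flattenK -[pieces w']flattenK same !pieces_shape.
  by move/eq_in_map => same_n; apply/ffunP => n; apply: same_n; rewrite mem_enum.
apply: le_trans (ent_le_card P_prob b_gt1 code_inj) _.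
by rewrite card_tuple natrX logbX // ler_nat.
Qed.

Lemma fn_of_allN (N : nat) (T U : eqType) (X : 'I_N -> Om -> T) (Y : Om -> U) :
  (forall n, is_fn_of P (X n) Y) -> is_fn_of P (allN X) Y.
Proof. by move=> XY w w' Pw Pw' E; apply/ffunP => n; rewrite !ffunE (XY n w w'). Qed.

Lemma fn_of_coord (N : nat) (T : eqType) (X : 'I_N -> Om -> T) n :
  is_fn_of P (X n) (allN X).
Proof.
by move=> w w' _ _ /(congr1 (fun f : {ffun 'I_N -> T} => f n)); rewrite !ffunE.
Qed.

Lemma fn_of_Wbar_Wk (K : nat) (T : eqType) (W : Om -> {ffun 'I_K -> T}) k :
  is_fn_of P W (jnt (Wbar W k) (Wk W k)).
Proof.
move=> w w' _ _ [Wbar_eq Wk_eq]; apply/ffunP => j.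
have [->//|jk] := eqVneq j k.
by move/(congr1 (fun f : {ffun 'I_K -> option T} => f j)): Wbar_eq; rewrite !ffunE (negbTE jk) => -[].
Qed.

Lemma fn_of_Wk (K : nat) (T : eqType) (W : Om -> {ffun 'I_K -> T}) k :
  is_fn_of P (Wk W k) W.
Proof. by move=> w w' _ _; rewrite /Wk => ->. Qed.

Lemma fn_of_Wbar (K : nat) (T : eqType) (W : Om -> {ffun 'I_K -> T}) k :
  is_fn_of P (Wbar W k) W.
Proof. by move=> w w' _ _; rewrite /Wbar => ->. Qed.

Lemma fn_of_RU (M : nat) (T : eqType) (RS : Om -> {ffun 'I_M -> T}) S :
  is_fn_of P (RU RS S) RS.
Proof. by move=> w w' _ _; rewrite /RU => ->. Qed.

End Collections.

(* Discharges  is_fn_of P X Y  when X is a tuple of components of Y, or of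
   variables that a hypothesis  is_fn_of P X' Y'  reduces to such components;
   n bounds the search depth. *)
Ltac solve_fn_of_rec n :=
  lazymatch goal with
  | |- is_fn_of _ (jnt _ _) _ => apply: fn_of_jnt; [solve_fn_of_rec n | solve_fn_of_rec n]
  | _ =>
    lazymatch n with
    | O => first [exact: fn_of_refl | exact: fn_of_const | exact: fn_of_coord]
    | S ?m =>
      first [ exact: fn_of_refl | exact: fn_of_const | exact: fn_of_coord
            | apply: fn_of_jntl; solve_fn_of_rec m
            | apply: fn_of_jntr; solve_fn_of_rec m
            | match goal with h : is_fn_of _ ?X _ |- is_fn_of _ ?X _ =>
                apply: (fn_of_trans h); solve_fn_of_rec m end ]
    end
  end.
Ltac solve_fn_of := solve_fn_of_rec 8%N.

Section Core.
Variables (R : realType) (Om : finType) (P : Om -> R).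
Hypothesis P_prob : is_prob P.

(* With Y = (Q, A, R_S, W_1):
     I(W_bar; Q,A,R_S | W_1) = H(W) + H(Y) - H(W_bar, Y) - H(W_1)
                             <= H(W) - H(W,F,R_S) + H(F,A,R_S) - H(W_1)
   by I(W_bar; F | Y) >= 0 (Q is a function of F, A of (Q,W,R_S), W_1 of
   (F,A,R_S)); then independence of W and (F,R_S) and I(A; F,R_S) >= 0
   bound the right-hand side by H(A) - H(W_1). *)
Lemma cmi_Wbar_le (b : R) (TW T1 T2 TF TQ TA TS : eqType) (W : Om -> TW)
  (W1 : Om -> T1) (Wb : Om -> T2) (Fr : Om -> TF) (Qa : Om -> TQ) (Aa : Om -> TA)
  (RS : Om -> TS) :
  1 < b ->
  is_fn_of P W (jnt Wb W1) -> is_fn_of P W1 W -> is_fn_of P Wb W ->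
  is_fn_of P Qa Fr -> is_fn_of P Aa (jnt (jnt Qa W) RS) ->
  is_fn_of P W1 (jnt (jnt Fr Aa) RS) ->
  mi P b W (jnt Fr RS) = 0 ->
  cmi P b Wb (jnt (jnt Qa Aa) RS) W1 <= ent P b Aa - ent P b W1.
Proof.
move=> b_gt1 W_fn W1_fn Wb_fn Qa_fn Aa_fn W1_dec indep.
have strategy_info := cmi_ge0 P_prob b_gt1 Wb Fr (jnt (jnt (jnt Qa Aa) RS) W1).
have answers_info := mi_ge0 P_prob b_gt1 Aa (jnt Fr RS).
have E := ent_equiv P_prob b.
have split_W : ent P b (jnt Wb W1) = ent P b W by apply: E; solve_fn_of.
have regroup : ent P b (jnt Wb (jnt (jnt (jnt Qa Aa) RS) W1))
             = ent P b (jnt (jnt Wb (jnt (jnt Qa Aa) RS)) W1).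
  by apply: E; solve_fn_of.
have with_Fr : ent P b (jnt (jnt Wb Fr) (jnt (jnt (jnt Qa Aa) RS) W1))
             = ent P b (jnt (jnt W Fr) RS).
  by apply: E; solve_fn_of.
have Fr_Y : ent P b (jnt Fr (jnt (jnt (jnt Qa Aa) RS) W1))
          = ent P b (jnt (jnt Fr Aa) RS).
  by apply: E; solve_fn_of.
have Aa_Fr : ent P b (jnt Aa (jnt Fr RS)) = ent P b (jnt (jnt Fr Aa) RS).
  by apply: E; solve_fn_of.
have W_Fr : ent P b (jnt W (jnt Fr RS)) = ent P b (jnt (jnt W Fr) RS).
  by apply: E; solve_fn_of.
rewrite /cmi /mi in strategy_info answers_info indep *; lra.
Qed.

End Core.

Unset Implicit Arguments. Set Strict Implicit.

Theorem lemma1 (R : realType) (F : finFieldType) (Om : finType) (P : Om -> R)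
  (N K L M m D : nat) (TR TF TQ : eqType)
  (W : Om -> {ffun 'I_K -> {ffun 'I_L -> F}})
  (RS : Om -> {ffun 'I_M -> TR}) (Fr : Om -> TF)
  (Q : 'I_K -> {set 'I_M} -> 'I_N -> Om -> TQ)
  (A : 'I_K -> {set 'I_M} -> 'I_N -> Om -> seq F)
  (k1 : 'I_K) (S : {set 'I_M}) :
  (1 <= N)%N -> (2 <= K)%N -> nat_of_ord k1 = 0%N ->
  is_prob P ->
  valid_scheme P m W RS Fr Q A ->
  download_bound P m A D ->
  #|S| = m ->
  cmi P (#|F|%:R : R) (Wbar W k1)
      (jnt (jnt (allN (Q k1 S)) (allN (A k1 S))) RS) (Wk W k1)
    <= D%:R - L%:R.
Proof.
move=> _ _ _ P_prob valid download S_card.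
have b_gt1 : 1 < (#|F|%:R : R) by rewrite ltr1n card_F_gt1.
case: valid => W_unif [C1 [_ [C3 [C4 [C5 _]]]]].
have Q_fn : is_fn_of P (allN (Q k1 S)) Fr := cent0_is_fn_of P_prob b_gt1 (C3 k1 S S_card).
have A_fn : is_fn_of P (allN (A k1 S)) (jnt (jnt (allN (Q k1 S)) W) RS).
  apply: fn_of_allN => n.
  have An_fn := cent0_is_fn_of P_prob b_gt1 (C4 k1 S n S_card); solve_fn_of.
have RU_fn : is_fn_of P (RU RS S) RS by exact: fn_of_RU.
have W1_fn : is_fn_of P (Wk W k1) (jnt (jnt Fr (allN (A k1 S))) RS).
  have W1_dec := cent0_is_fn_of P_prob b_gt1 (C5 k1 S S_card); solve_fn_of.
have indep : mi P (#|F|%:R) W (jnt Fr RS) = 0.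
  by rewrite -(C1 k1 S S_card); apply: mi_equiv_r => //; solve_fn_of.
have [d [d_size d_sum]] := download k1 S S_card.
apply: le_trans (cmi_Wbar_le P_prob b_gt1 _ _ _ Q_fn A_fn W1_fn indep) _.
- exact: fn_of_Wbar_Wk.
- exact: fn_of_Wk.
- exact: fn_of_Wbar.
- by rewrite (ent_Wk P_prob k1 W_unif) lerB // (ent_answers_le P_prob d_size d_sum).
Qed.
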